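(* Let $n \ge m \ge 2$ with $n$ odd, and let $K_{n,m}$ be the complete bipartite graph with bipartition $(X,Y)$, $|X|=n$, $|Y|=m$. If $U$ is a strong edge geodetic set of $K_{n,m}$ with $X \subseteq U$, then $|U| \ge \frac{2n}{n+1} + m$.
   Context: All graphs are finite, simple and connected. A set $S \subseteq V(G)$ is a strong edge geodetic set of $G$ if one can assign to every unordered pair $\{u,v\}$ of distinct vertices of $S$ either one shortest $u,v$-path $P_{uv}$ in $G$ or no path, in such a way that every edge of $G$ lies on at least one of the assigned paths. *)

From mathcomp Require Import all_boot all_order all_algebra.
Set Implicit Arguments. Unset Strict Implicit. Unset Printing Implicit Defensive.

(* [q] is a u,v-walk given as its full vertex list u = q_0, q_1, ..., q_k = v. *)
Definition walk_uv (T : finType) (e : rel T) (u v : T) (q : seq T) : Prop :=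
  exists q', q = u :: q' /\ path e u q' /\ last u q' = v.

(* A shortest u,v-path: a u,v-walk whose length is minimal among all u,v-walks
   (such a walk is automatically a path). *)
Definition shortest_path (T : finType) (e : rel T) (u v : T) (q : seq T) : Prop :=
  walk_uv e u v q /\
  forall q2 : seq T, walk_uv e u v q2 -> size q <= size q2.

Definition edge_on (T : finType) (a b : T) (q : seq T) : bool :=
  ((a, b) \in zip q (behead q)) || ((b, a) \in zip q (behead q)).

(* Strong edge geodetic set: one assigns to every unordered pair {u,v} of
   distinct vertices of S (represented by the 2-set [set u; v]) either one
   shortest u,v-path or no path, so that every edge lies on an assigned path. *)
Definition strong_edge_geodetic (T : finType) (e : rel T) (S : {set T}) : Prop :=
  exists f : {set T} -> option (seq T),
    (forall u v q, u \in S -> v \in S -> u != v -> f [set u; v] = Some q ->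
        shortest_path e u v q \/ shortest_path e v u q) /\
    (forall a b, e a b ->
        exists u v q, [/\ u \in S, v \in S, u != v, f [set u; v] = Some q
                        & edge_on a b q]).

(* Complete bipartite graph K_{n,m} on vertex set 'I_n + 'I_m, with
   X = inl-vertices (|X| = n), Y = inr-vertices (|Y| = m). *)
Definition Knm_rel (n m : nat) : rel ('I_n + 'I_m)%type :=
  fun x y => match x, y with
             | inl _, inr _ => true
             | inr _, inl _ => true
             | _, _ => false
             end.

Definition Kpart_X (n m : nat) : {set ('I_n + 'I_m)%type} :=
  [set x | if x is inl _ then true else false].

From mathcomp Require Import all_boot all_order all_algebra.
From mathcomp Require Import zify.
Import GRing.Theory Num.Theory.
Set Implicit Arguments. Unset Strict Implicit. Unset Printing Implicit Defensive.

(* A vertex y of Y outside U is never an end of an assigned path, so each edge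
   x y is covered by an assigned geodesic x_a y x_b with a, b in X; the pairs
   {a, b} whose geodesic has middle vertex y cover X, and since n is odd there
   are at least (n + 1) / 2 of them.  Each pair has a single assigned path, so
   if k vertices of Y lie outside U then k (n + 1) / 2 <= C(n, 2), that is
   k <= n (n - 1) / (n + 1), and |U| = n + m - k >= m + 2n / (n + 1). *)

Lemma mem_zip1 (S T : eqType) (s : seq S) (t : seq T) a b :
  (a, b) \in zip s t -> a \in s.
Proof.
elim: s t => [|x s IHs] [|y t] //=; rewrite !in_cons.
by case/orP=> [/eqP [-> _]|/IHs ->]; rewrite ?eqxx ?orbT.
Qed.

Lemma mem_zip2 (S T : eqType) (s : seq S) (t : seq T) a b :
  (a, b) \in zip s t -> b \in t.
Proof.
elim: s t => [|x s IHs] [|y t] //=; rewrite !in_cons.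
by case/orP=> [/eqP [_ ->]|/IHs ->]; rewrite ?eqxx ?orbT.
Qed.

Lemma edge_on_mem (T : finType) (a b : T) q : edge_on a b q -> (a \in q) && (b \in q).
Proof.
by case/orP=> q_ab; rewrite (mem_zip1 q_ab) (mem_behead (mem_zip2 q_ab)).
Qed.

Lemma shortest_path_mid (T : finType) (e : rel T) u v y q :
  (exists2 w, walk_uv e u v w & size w <= 3)%N ->
  shortest_path e u v q -> y \in q -> y != u -> y != v ->
  q = [:: u; y; v] /\ e u y && e y v.
Proof.
move=> [w walk_w size_w] [[q' [-> [path_q' last_q']]] minq] yq yu yv.
have := leq_trans (minq w walk_w) size_w.
move: yq path_q' last_q'; case: q' {minq} => [|c [|d [|x r]]] //=.
- by rewrite inE (negbTE yu).
- by rewrite !inE (negbTE yu) => /eqP yc _ cv; rewrite yc cv eqxx in yv.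
- rewrite !inE (negbTE yu) /= andbT => /orP [/eqP ->|/eqP yd] /andP [uc cd] dv _.
    by rewrite -dv uc cd.
  by rewrite yd dv eqxx in yv.
Qed.

Lemma sum_card_fibers (I J : finType) (f : I -> option J) (A : {set I}) (B : {set J}) :
  (\sum_(j in B) #|[set i in A | f i == Some j]| <= #|A|)%N.
Proof.
have cardE j : #|[set i in A | f i == Some j]| = (\sum_(i in A) (f i == Some j))%N.
  rewrite -sum1_card big_mkcond /= [RHS]big_mkcond /=.
  by apply: eq_bigr => i _; rewrite !inE; case: (i \in A); case: (f i == _).
rewrite (eq_bigr _ (fun j _ => cardE j)) exchange_big /= -sum1_card leq_sum // => i _.
case: (f i) => [y|]; last by rewrite big1.
rewrite big_mkcond (bigD1 y) //= big1 ?addn0.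
  by case: (y \in B); rewrite ?eqxx.
by move=> j /negbTE jy; rewrite (inj_eq Some_inj) eq_sym jy if_same.
Qed.

Lemma card_le_cover2 (T : finType) (P : {set {set T}}) :
  {in P, forall S : {set T}, #|S| = 2} -> (forall x, exists2 S, S \in P & x \in S) ->
  (#|T| <= 2 * #|P|)%N.
Proof.
move=> P2 Pcov; have coverT : cover P = setT.
  by apply/setP => x; rewrite inE; have [S PS xS] := Pcov x; apply/bigcupP; exists S.
by rewrite -cardsT -coverT mulnC -sum_nat_const -(eq_bigr _ P2) (leq_card_cover P).1.
Qed.

Section LabelledPairs.

Variables (T L : finType) (lab : {set T} -> option L).

Definition labelled_pairs (y : L) : {set {set T}} :=
  [set S in [set S : {set T} | #|S| == 2] | lab S == Some y].

Definition covers_by_pairs (y : L) : Prop :=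
  forall x : T, exists2 S, S \in labelled_pairs y & x \in S.

Lemma odd_card_lt_pairs y : odd #|T| -> covers_by_pairs y ->
  (#|T| < 2 * #|labelled_pairs y|)%N.
Proof.
move=> oddT cov; have le_pairs : (#|T| <= 2 * #|labelled_pairs y|)%N.
  by apply: card_le_cover2 cov => S; rewrite !inE => /andP [/eqP].
by rewrite ltn_neqAle le_pairs andbT; apply: contraTneq oddT => ->; rewrite oddM.
Qed.

Lemma card_covering_labels (Y : {set L}) :
  odd #|T| -> {in Y, forall y, covers_by_pairs y} -> (#|Y| * #|T|.+1 <= #|T| * #|T|.-1)%N.
Proof.
move=> oddT covY.
have := sum_card_fibers lab [set S : {set T} | #|S| == 2] Y.
rewrite card_draws -(leq_pmul2l (isT : 0 < 2)%N) -mul_bin_diag bin1 => le_sum.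
rewrite -sum_nat_const (leq_trans _ le_sum) // big_distrr leq_sum // => y Yy.
exact: odd_card_lt_pairs (covY y Yy).
Qed.

End LabelledPairs.

Lemma Knm_relC n m : symmetric (@Knm_rel n m).
Proof. by case=> x; case. Qed.

Lemma Knm_walk3 n m (i : 'I_n) (j : 'I_m) (u v : 'I_n + 'I_m) :
  exists2 w, walk_uv (@Knm_rel n m) u v w & (size w <= 3)%N.
Proof.
case: u => a; case: v => b.
- by exists [:: inl a; inr j; inl b] => //; exists [:: inr j; inl b].
- by exists [:: inl a; inr b] => //; exists [:: inr b].
- by exists [:: inr a; inl b] => //; exists [:: inl b].
- by exists [:: inr a; inl i; inr b] => //; exists [:: inl i; inr b].
Qed.

Section KnmGeodetic.

Variables (n m : nat) (U : {set 'I_n + 'I_m}).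
Variable f : {set 'I_n + 'I_m} -> option (seq ('I_n + 'I_m)).
Hypothesis f_shortest : forall u v q, u \in U -> v \in U -> u != v ->
  f [set u; v] = Some q ->
  shortest_path (@Knm_rel n m) u v q \/ shortest_path (@Knm_rel n m) v u q.
Hypothesis f_cover : forall a b, Knm_rel a b ->
  exists u v q, [/\ u \in U, v \in U, u != v, f [set u; v] = Some q & edge_on a b q].
Hypothesis XU : Kpart_X n m \subset U.

Definition mid_label (S : {set 'I_n}) : option ('I_n + 'I_m) :=
  obind (fun q => ohead (behead q)) (f (inl @: S)).

Lemma outside_covers_by_pairs y : y \notin U -> covers_by_pairs mid_label y.
Proof.
case: y => [a|j] yU i.
  by rewrite (subsetP XU) ?inE in yU.
have [u [v [q [uU vU uv fq /edge_on_mem /andP [iq jq]]]]] := @f_cover (inl i) (inr j) isT.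
have ju : inr j != u by apply: contraNneq yU => ->.
have jv : inr j != v by apply: contraNneq yU => ->.
have [q_mid /andP [uj vj]] : (q = [:: u; inr j; v] \/ q = [:: v; inr j; u]) /\
    Knm_rel u (inr j) && Knm_rel v (inr j).
  case: (f_shortest uU vU uv fq) => /shortest_path_mid mid.
    by have [-> ->] := mid _ (Knm_walk3 i j u v) jq ju jv; split; [left|].
  have [-> /andP [vj' ju']] := mid _ (Knm_walk3 i j v u) jq jv ju.
  by split; [right | rewrite vj' andbT Knm_relC].
case: u v uj vj {uU vU ju jv} uv fq q_mid => // a [] // b _ _ ab fq q_mid.
have ab' : a != b by apply: contraNneq ab => ->.
exists [set a; b]; last first.
  by move: iq; case: q_mid => ->; rewrite !inE /= !(inj_eq inl_inj) // orbC.
rewrite !inE cards2 ab' /mid_label imsetU1 imset_set1 fq /=.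
by case: q_mid => ->.
Qed.

End KnmGeodetic.

Local Open Scope ring_scope.

Theorem mainTheorem5 (n m : nat) (U : {set ('I_n + 'I_m)%type}) :
  (2 <= m)%N -> (m <= n)%N -> odd n ->
  strong_edge_geodetic (@Knm_rel n m) U ->
  Kpart_X n m \subset U ->
  ((2 * n)%:R / (n + 1)%:R + m%:R <= (#|U|%:R : rat)).
Proof.
move=> _ _ n_odd [f [f_shortest f_cover]] XU.
have le_outside : (#|~: U| * n.+1 <= n * n.-1)%N.
  have := @card_covering_labels _ _ (mid_label f) (~: U); rewrite card_ord; apply=> // y.
  by rewrite inE; apply: outside_covers_by_pairs f_shortest f_cover XU y.
have cardU : (#|U| + #|~: U| = n + m)%N by rewrite cardsC card_sum !card_ord.
have le_nat : (2 * n + m * (n + 1) <= #|U| * (n + 1))%N by nia.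
have n1_gt0 : 0 < (n + 1)%:R :> rat by rewrite ltr0n addn1.
rewrite -[m%:R](mulfK (lt0r_neq0 n1_gt0)) -mulrDl ler_pdivrMr //.
by rewrite -!natrM -natrD ler_nat.
Qed.
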